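(* Let $q$ be a power of an odd prime $p$, let $G=\mathrm{SL}_2(q)$ or $\mathrm{PSL}_2(q)$, and let $\mathcal{C}$ be a conjugacy class of non-trivial unipotent elements (non-trivial $p$-elements) in $G$. Let $y_1\in\mathcal{C}$ and let $S_1$ be the unique Sylow $p$-subgroup of $G$ containing $y_1$. Then for each Sylow $p$-subgroup $S_2$ of $G$ different from $S_1$, there exists a unique $y_2\in S_2\cap\mathcal{C}$ such that $y_1y_2$ is the product of a non-trivial unipotent element and an element of $Z(G)$. *)

From HB Require Import structures.
From mathcomp Require Import all_boot all_order all_fingroup all_algebra all_solvable.
Set Implicit Arguments. Unset Strict Implicit. Unset Printing Implicit Defensive.
Import GRing.Theory.
Local Open Scope group_scope.

Section SL2.
Variable F : finFieldType.

Definition SL2 : {set {'GL_2[F]}} := [set g : {'GL_2[F]} | (\det (GLval g) == 1)%R].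

Lemma SL2_group_set : group_set SL2.
Proof.
apply/group_setP; split; first by rewrite inE GL_1E det1.
move=> x y; rewrite !inE => /eqP dx /eqP dy.
by rewrite GL_ME det_mulmx dx dy mulr1.
Qed.

Canonical SL2_group := Group SL2_group_set.

Definition PSL2 := (SL2_group / 'Z(SL2_group))%G.
End SL2.

Definition prop34_property (gT : finGroupType) (G : {group gT}) (p : nat) : Prop :=
  forall x : gT, x \in G -> p.-elt x -> x != 1 ->
  forall y1 : gT, y1 \in x ^: G ->
  forall S1 : {group gT}, S1 \in 'Syl_p(G) -> y1 \in S1 ->
  forall S2 : {group gT}, S2 \in 'Syl_p(G) -> S2 != S1 ->
  exists! y2 : gT, y2 \in S2 :&: x ^: G /\
    exists u z : gT, [/\ u \in G, p.-elt u, u != 1, z \in 'Z(G) & y1 * y2 = u * z].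

From mathcomp Require Import all_boot all_order all_fingroup all_algebra all_solvable.
From mathcomp Require Import ring.
Set Implicit Arguments. Unset Strict Implicit. Unset Printing Implicit Defensive.
Import GRing.Theory.

(* Write the unipotents of [SL_2(F)] as [1 + N] with [N] of trace 0 and [N ^+ 2 = 0]:
   in characteristic [p] these are exactly the [p]-elements, and every Sylow
   [p]-subgroup is a line [{1 + t N}].  For [y1 = 1 + N] and [S2 = {1 + t M}] one has
   [\tr (y1 * (1 + t M)) = 2 + t b(N, M)], where the polar form [b(N, M)] is nonzero
   because [S1 != S2].  The centre is [{1, -1}], so [y1 * y2] is unipotent times
   central iff this trace is [2] or [-2], i.e. [t = 0] or [t = -4 / b(N, M)]; only the
   second value gives [y2 != 1], and that [y2] is conjugate to [y1] by [(N + t M) / 2],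
   a matrix of determinant 1.  The statement passes to [PSL_2] because the centre is a
   central [p']-subgroup, so cosets of [p]-elements have unique [p]-element lifts, and
   [Z(SL_2 / Z) = 1]. *)

Local Open Scope ring_scope.

(* [ring] cannot use hypotheses; these lemmas let it check an identity [x = y] once
   [x - y] is exhibited as a combination of hypotheses [l = r]. *)
Section LinearCombination.
Variable R : comNzRingType.

Lemma eq_lincomb1 (x y k l r : R) : l = r -> x - y = k * (l - r) -> x = y.
Proof. by move=> -> /eqP; rewrite subrr mulr0 subr_eq0 => /eqP. Qed.

Lemma eq_lincomb2 (x y k l r k' l' r' : R) : l = r -> l' = r' ->
  x - y = k * (l - r) + k' * (l' - r') -> x = y.
Proof. by move=> -> -> /eqP; rewrite !subrr !mulr0 addr0 subr_eq0 => /eqP. Qed.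

Lemma eq_lincomb3 (x y k l r k' l' r' k'' l'' r'' : R) :
  l = r -> l' = r' -> l'' = r'' ->
  x - y = k * (l - r) + k' * (l' - r') + k'' * (l'' - r'') -> x = y.
Proof. by move=> -> -> -> /eqP; rewrite !subrr !mulr0 !addr0 subr_eq0 => /eqP. Qed.

End LinearCombination.

Lemma pchar_odd_two_neq0 (R : nzSemiRingType) p :
  p \in [pchar R] -> odd p -> (2 : R) != 0.
Proof.
move=> pcharRp p_odd; rewrite -(dvdn_pcharf pcharRp).
have p_pr := pcharf_prime pcharRp; clear pcharRp.
by apply: contraL p_odd => /(dvdn_leq (isT : 0 < 2)%N); case: p p_pr => [|[|[|]]].
Qed.

Lemma subr1X_pchar (R : nzRingType) p (a : R) k :
  p \in [pchar R] -> (a - 1) ^+ (p ^ k) = a ^+ (p ^ k) - 1.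
Proof.
move=> pcharRp; elim: k => [|k IHk]; first by rewrite expn0 !expr1.
rewrite expnSr !exprM IHk.
by have := pFrobenius_autB_comm pcharRp (commr1 (a ^+ (p ^ k))); rewrite !pFrobenius_autE expr1n.
Qed.

Section Matrix22.
Variable R : comNzRingType.
Implicit Types (a b c d x y z s t : R) (A : 'M[R]_2).

Definition mx22 a b c d : 'M[R]_2 :=
  \matrix_(i < 2, j < 2) if i == 0 then (if j == 0 then a else b)
                         else (if j == 0 then c else d).

Lemma ord2P (i : 'I_2) : i = 0 \/ i = 1.
Proof. by case: i => [[|[|]]] //= ?; [left|right]; apply: val_inj. Qed.

Lemma mx22E A : A = mx22 (A 0 0) (A 0 1) (A 1 0) (A 1 1).
Proof.
by apply/matrixP => i j; rewrite mxE; case: (ord2P i) => ->; case: (ord2P j) => ->.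
Qed.

Lemma mx22_inj a b c d a' b' c' d' :
  mx22 a b c d = mx22 a' b' c' d' -> [/\ a = a', b = b', c = c' & d = d'].
Proof. by move/matrixP => E; split; [move: (E 0 0)|move: (E 0 1)|move: (E 1 0)|move: (E 1 1)]; rewrite !mxE. Qed.

Lemma mx22M a b c d a' b' c' d' :
  mx22 a b c d * mx22 a' b' c' d' =
  mx22 (a * a' + b * c') (a * b' + b * d') (c * a' + d * c') (c * b' + d * d').
Proof.
apply/matrixP => i j; rewrite [LHS]mxE !big_ord_recr big_ord0 /=.
by case: (ord2P i) => ->; case: (ord2P j) => ->; rewrite !mxE /= add0r.
Qed.

Lemma mx22N a b c d : - mx22 a b c d = mx22 (- a) (- b) (- c) (- d).
Proof.
by apply/matrixP => i j; rewrite !mxE; case: (ord2P i) => ->; case: (ord2P j) => ->.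
Qed.

Lemma mx22D a b c d a' b' c' d' :
  mx22 a b c d + mx22 a' b' c' d' = mx22 (a + a') (b + b') (c + c') (d + d').
Proof.
by apply/matrixP => i j; rewrite !mxE; case: (ord2P i) => ->; case: (ord2P j) => ->.
Qed.

Lemma scalar_mx22 a : (a%:M : 'M[R]_2) = mx22 a 0 0 a.
Proof.
by apply/matrixP => i j; rewrite !mxE; case: (ord2P i) => ->; case: (ord2P j) => ->.
Qed.

Lemma mx22_1 : (1 : 'M[R]_2) = mx22 1 0 0 1.
Proof. exact: scalar_mx22. Qed.

Lemma det_mx22 a b c d : \det (mx22 a b c d) = a * d - b * c.
Proof.
rewrite (expand_det_row _ 0) !big_ord_recr big_ord0 /= /cofactor !det_mx11 !mxE /=.
by rewrite add0r expr0 expr1 mul1r mulN1r mulrN.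
Qed.

Lemma det_mx2N A : \det (- A) = \det A.
Proof. by rewrite -scaleN1r detZ sqrrN !expr1n mul1r. Qed.

Lemma mxtrace_mx22 a b c d : \tr (mx22 a b c d) = a + d.
Proof. by rewrite /mxtrace !big_ord_recr big_ord0 !mxE /= add0r. Qed.

Lemma det_mx2_subr1 A : \det (A - 1) = \det A - \tr A + 1.
Proof.
rewrite [A]mx22E mx22_1 mx22N mx22D !det_mx22 mxtrace_mx22; ring.
Qed.

(* [unip x y z = 1 + N] with [N = mx22 x y z (- x)]; since [N ^+ 2 = (qform x y z)%:M],
   the unipotent elements of [SL_2] are exactly the [unip x y z] with [qform x y z = 0],
   and [bform] is the polar form of [qform]. *)
Definition unip x y z := mx22 (1 + x) y z (1 - x).
Definition qform x y z := x ^+ 2 + y * z.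
Definition bform x y z x' y' z' := 2 * x * x' + y * z' + z * y'.

Lemma qformZ t x y z : qform (t * x) (t * y) (t * z) = t ^+ 2 * qform x y z.
Proof. by rewrite /qform; ring. Qed.

Lemma bformZr t x y z x' y' z' :
  bform x y z (t * x') (t * y') (t * z') = t * bform x y z x' y' z'.
Proof. by rewrite /bform; ring. Qed.

Lemma det_unip x y z : \det (unip x y z) = 1 - qform x y z.
Proof. by rewrite det_mx22 /qform; ring. Qed.

Lemma mxtrace_unip x y z : \tr (unip x y z) = 2.
Proof. by rewrite mxtrace_mx22; ring. Qed.

Lemma mxtrace_unipM x y z x' y' z' :
  \tr (unip x y z * unip x' y' z') = 2 + bform x y z x' y' z'.
Proof. by rewrite mx22M mxtrace_mx22 /bform; ring. Qed.

Lemma unip0 : unip 0 0 0 = 1.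
Proof. by rewrite mx22_1 /unip addr0 subr0. Qed.

Lemma unipD x y z s t : qform x y z = 0 ->
  unip (s * x) (s * y) (s * z) * unip (t * x) (t * y) (t * z) =
  unip ((s + t) * x) ((s + t) * y) ((s + t) * z).
Proof.
rewrite /qform => Q; rewrite mx22M /unip.
by congr mx22; [apply: (eq_lincomb1 (k := s * t) Q)|..|apply: (eq_lincomb1 (k := s * t) Q)]; ring.
Qed.

Lemma unipX x y z n : qform x y z = 0 ->
  unip x y z ^+ n = unip (n%:R * x) (n%:R * y) (n%:R * z).
Proof.
move=> Q; elim: n => [|n IHn]; first by rewrite expr0 !mul0r unip0.
by rewrite exprS IHn -{1}[x]mul1r -{1}[y]mul1r -{1}[z]mul1r unipD // nat1r.
Qed.

Lemma unipP A : \det A = 1 -> \tr A = 2 ->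
  exists x y z, A = unip x y z /\ qform x y z = 0.
Proof.
rewrite [A]mx22E det_mx22 mxtrace_mx22 /unip /qform.
set a := A 0 0; set b := A 0 1; set c := A 1 0; set d := A 1 1 => Hdet Htr.
exists (a - 1), b, c; split.
  by congr mx22; [ring|apply: (eq_lincomb1 (k := 1) Htr); ring].
by apply: (eq_lincomb2 (k := -1) (k' := a) Hdet Htr); ring.
Qed.

Lemma mx2_commute_unip_scalar A :
  A * unip 0 1 0 = unip 0 1 0 * A -> A * unip 0 0 1 = unip 0 0 1 * A ->
  A = (A 0 0)%:M.
Proof.
rewrite [A]mx22E /unip !mx22M !mxE /= scalar_mx22.
set a := A 0 0; set b := A 0 1; set c := A 1 0; set d := A 1 1.
move=> /mx22_inj [E1 E2 _ _] /mx22_inj [F1 _ _ _].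
have c0 : c = 0 by apply: (eq_lincomb1 (k := -1) E1); ring.
have b0 : b = 0 by apply: (eq_lincomb1 (k := 1) F1); ring.
have da : d = a by apply: (eq_lincomb2 (k := -1) (k' := 0) E2 E1); ring.
by rewrite c0 b0 da.
Qed.

End Matrix22.

Section Unipotent22.
Variable F : fieldType.
Implicit Types x y z s t : F.

Lemma unip_neq1 x y z : qform x y z = 0 -> unip x y z != 1 -> (y != 0) || (z != 0).
Proof.
rewrite /qform -negb_and => Q; apply: contra => /andP[/eqP y0 /eqP z0].
move: Q; rewrite y0 z0 mul0r addr0 => /eqP; rewrite expf_eq0 /= => /eqP x0.
by rewrite x0 unip0.
Qed.

Lemma qform_parallel_y x y z x' y' z' : qform x y z = 0 -> qform x' y' z' = 0 ->
  y != 0 -> bform x y z x' y' z' = 0 ->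
  exists t, [/\ x' = t * x, y' = t * y & z' = t * z].
Proof.
rewrite /qform /bform => Q Q' y0 B.
have /eqP : (x * y' - x' * y) ^+ 2 = 0.
  by apply: (eq_lincomb3 (k := - y' * y) (k' := y ^+ 2) (k'' := y' ^+ 2) B Q' Q); ring.
rewrite expf_eq0 /= subr_eq0 => /eqP E.
exists (y' / y); split.
- by apply: (eq_lincomb1 (k := -1 / y) E); field.
- by field.
apply: (eq_lincomb3 (k := 1 / y) (k' := 2 * x / y ^+ 2) (k'' := - 2 * y' / y ^+ 2) B E Q).
by field.
Qed.

Lemma qform_parallel x y z x' y' z' : qform x y z = 0 -> qform x' y' z' = 0 ->
  (y != 0) || (z != 0) -> bform x y z x' y' z' = 0 ->
  exists t, [/\ x' = t * x, y' = t * y & z' = t * z].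
Proof.
move=> Q Q' /orP[y0|z0] B; first exact: qform_parallel_y.
have Qs : qform x z y = 0 by rewrite /qform mulrC.
have Qs' : qform x' z' y' = 0 by rewrite /qform mulrC.
have Bs : bform x z y x' z' y' = 0 by rewrite /bform -B addrAC.
have [t [-> -> ->]] := qform_parallel_y Qs Qs' z0 Bs.
by exists t.
Qed.

Lemma unipM_scalar_bform x y z x' y' z' (U : 'M[F]_2) l :
  unip x y z * unip x' y' z' = U * l%:M -> \tr U = 2 -> l * l = 1 ->
  bform x y z x' y' z' = 0 \/ bform x y z x' y' z' = -4.
Proof.
move=> E trU l2.
have B : 2 + bform x y z x' y' z' = l * 2.
  by rewrite -mxtrace_unipM E [_ * _]mul_mx_scalar mxtraceZ trU.
have /eqP : (l - 1) * (l + 1) = 0 by apply: (eq_lincomb1 (k := 1) l2); ring.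
rewrite mulf_eq0 => /orP[/eqP l1|/eqP l1]; [left|right].
  by apply: (eq_lincomb2 (k := 1) (k' := 2) B l1); ring.
by apply: (eq_lincomb2 (k := 1) (k' := 2) B l1); ring.
Qed.

Hypothesis two_neq0 : (2 : F) != 0.

(* The conjugator is [(N + N') / 2], where [unip v = 1 + N] and [unip w = 1 + N']:
   it intertwines [N] and [N'] because [N ^+ 2 = N' ^+ 2 = 0]. *)
Lemma unip_conj x y z x' y' z' : qform x y z = 0 -> qform x' y' z' = 0 ->
  bform x y z x' y' z' = -4 ->
  exists2 K : 'M[F]_2, \det K = 1 & K * unip x y z = unip x' y' z' * K.
Proof.
rewrite /qform /bform => Q Q' B.
exists (mx22 ((x + x') / 2) ((y + y') / 2) ((z + z') / 2) (- (x + x') / 2)).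
  rewrite det_mx22; apply: (eq_lincomb3 (k := -1/4) (k' := -1/4) (k'' := -1/4) Q Q' B).
  have four_neq0 : (4 : F) != 0 by rewrite (_ : 4 = 2 * 2) ?mulf_neq0 //; ring.
  by field; rewrite four_neq0.
rewrite /unip !mx22M; congr mx22; try by field.
- by apply: (eq_lincomb2 (k := 1/2) (k' := -1/2) Q Q'); field.
- by apply: (eq_lincomb2 (k := 1/2) (k' := -1/2) Q Q'); field.
Qed.

Lemma unipM_neqN1 x y z x' y' z' : qform x y z = 0 -> unip x y z * unip x' y' z' != -1.
Proof.
move=> Q; apply/eqP => E.
have inv : unip (-1 * x) (-1 * y) (-1 * z) * unip (1 * x) (1 * y) (1 * z) = 1.
  by rewrite unipD // addNr !mul0r unip0.
have : unip x' y' z' = - unip (-1 * x) (-1 * y) (-1 * z).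
  by rewrite -[unip x' y' z']mul1r -inv !mul1r -mulrA E mulrN1.
move/(congr1 mxtrace); rewrite raddfN /= !mxtrace_unip => two_eqN2.
have /eqP : (2 : F) * 2 = 0 by apply: (eq_lincomb1 (k := 1) two_eqN2); ring.
by rewrite mulf_eq0 orbb (negbTE two_neq0).
Qed.

End Unipotent22.

Section PcharUnipotent.
Variables (F : fieldType) (p : nat).
Hypothesis pcharFp : p \in [pchar F].
Implicit Type A : 'M[F]_2.

Lemma mx2_pchar : p \in [pchar 'M[F]_2].
Proof.
apply/andP; split; first exact: pcharf_prime pcharFp.
by rewrite -[p%:R]/((1%:M : 'M[F]_2) *+ p) -raddfMn (pcharf0 pcharFp) raddf0.
Qed.

Lemma mx2_unipotent_expp A : \det A = 1 -> \tr A = 2 -> A ^+ p = 1.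
Proof.
move=> detA trA; have [x [y [z [-> Q]]]] := unipP detA trA.
by rewrite unipX // (pcharf0 pcharFp) !mul0r unip0.
Qed.

(* A [p]-power root of [1] has [(A - 1) ^+ (p ^ k) = 0] by the Frobenius rule,
   hence [\det (A - 1) = 0], i.e. [\tr A = 2] when [\det A = 1]. *)
Lemma mx2_unipotent_of_expn A k : \det A = 1 -> A ^+ (p ^ k) = 1 -> \tr A = 2.
Proof.
move=> detA Ak1.
have detX n : \det ((A - 1) ^+ n) = \det (A - 1) ^+ n.
  by elim: n => [|n IHn]; rewrite ?det1 // !exprS detM IHn.
have /eqP : \det ((A - 1) ^+ (p ^ k)) = 0 by rewrite subr1X_pchar ?mx2_pchar // Ak1 subrr det0.
rewrite detX expf_eq0 expn_gt0 prime_gt0 ?(pcharf_prime pcharFp) //=.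
by rewrite det_mx2_subr1 detA => /eqP E; apply: (eq_lincomb1 (k := -1) E); ring.
Qed.

End PcharUnipotent.

Section Prop34Partner.
Local Open Scope group_scope.
Variables (gT : finGroupType) (G : {group gT}) (p : nat).

Definition prop34_partner (x y1 : gT) (S2 : {set gT}) (y2 : gT) : Prop :=
  y2 \in S2 :&: x ^: G /\
    exists u z : gT, [/\ u \in G, p.-elt u, u != 1, z \in 'Z(G) & y1 * y2 = u * z].

Lemma mem_class_pelt x y : x \in G -> p.-elt x -> x != 1 -> y \in x ^: G ->
  [/\ y \in G, p.-elt y & y != 1].
Proof. by move=> xG px x1 /imsetP[g gG ->]; rewrite groupJ ?p_eltJ ?conjg_eq1. Qed.

Lemma Sylow_nontrivial (S1 S2 : {group gT}) y :
  S1 \in 'Syl_p(G) -> S2 \in 'Syl_p(G) -> y \in S1 -> y != 1 -> exists2 h, h \in S2 & h != 1.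
Proof.
rewrite !inE => syl1 syl2 yS1 y1; apply/trivgPn.
rewrite trivg_card1 (card_Hall syl2) -(card_Hall syl1) -trivg_card1.
by apply: contra y1 => /eqP S11; move: yS1; rewrite S11 => /set1P ->.
Qed.

End Prop34Partner.

Section QuotientByCentralPprimeSubgroup.
Local Open Scope group_scope.
Variables (gT : finGroupType) (G K : {group gT}) (p : nat).
Hypotheses (sKZ : K \subset 'Z(G)) (p'K : p^'.-group K).

Let nKG : G \subset 'N(K) := normal_norm (sub_center_normal sKZ).
Let inN g : g \in G -> g \in 'N(K) := subsetP nKG g.

Lemma pelt_K_eq1 k : k \in K -> p.-elt k -> k = 1.
Proof. by move=> kK pk; apply/eqP; rewrite -order_eq1; apply/eqP/(pnat_1 pk (mem_p_elt p'K kK)). Qed.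

Lemma pelt_coset_eq1 a : a \in G -> p.-elt a -> (coset K a == 1) = (a == 1).
Proof.
move=> aG pa; apply/idP/eqP => [/eqP/(coset_idr (inN aG)) aK | ->]; last by rewrite morph1.
exact: pelt_K_eq1.
Qed.

(* [b^-1 * a] lies in the central subgroup [K], so it is a product of commuting
   [p]-elements, hence a [p]-element of the [p']-group [K]. *)
Lemma coset_pelt_inj a b : a \in G -> b \in G -> p.-elt a -> p.-elt b ->
  coset K a = coset K b -> a = b.
Proof.
move=> aG bG pa pb ab; set k := b^-1 * a.
have kK : k \in K.
  by apply: coset_idr; rewrite ?groupM ?groupV ?inN // morphM ?morphV ?groupV ?inN //= ab mulVg.
have cbk : commute b^-1 k.
  by case/centerP: (subsetP sKZ k kK) => _ ck; apply: commute_sym; apply: ck; rewrite groupV.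
have cba : commute b^-1 a.
  by rewrite -(mulKVg b a) -/k; apply: commuteM => //; apply: commute_sym (commuteV (commute_refl b)).
have k1 : k = 1 by apply: pelt_K_eq1; rewrite // p_eltM // p_eltV.
by rewrite -(mulKVg b a) -/k k1 mulg1.
Qed.

Lemma quotient_pelt_lift (ab : coset_of K) : ab \in G / K -> p.-elt ab ->
  exists2 a, a \in G & p.-elt a /\ coset K a = ab.
Proof.
case/morphimP => a aN aG -> pab; exists a.`_p.
  by apply: subsetP (cycle_constt p a); rewrite cycle_subG.
by rewrite p_elt_constt (morph_constt (coset_morphism K)) // constt_p_elt.
Qed.

Lemma quotient_Sylow_lift (Sb : {group coset_of K}) : Sb \in 'Syl_p(G / K) ->
  exists2 S : {group gT}, S \in 'Syl_p(G) & (S / K)%G = Sb.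
Proof.
rewrite inE => sylSb; have [P sylP] := Sylow_exists p G.
have sylPK : p.-Sylow(G / K) (P / K) := quotient_pHall (subset_trans (pHall_sub sylP) nKG) sylP.
have [_ /morphimP[g gN gG ->] SbE] := Sylow_trans sylPK sylSb.
exists (P :^ g)%G; first by rewrite inE pHallJ.
by apply: val_inj; rewrite /= SbE quotientJ.
Qed.

Lemma mem_Sylow_coset (S : {group gT}) a : S \in 'Syl_p(G) -> a \in G -> p.-elt a ->
  coset K a \in S / K -> a \in S.
Proof.
rewrite inE => sylS aG pa /morphimP[s _ sS as_].
have [sSG pS _] := and3P sylS.
by rewrite (coset_pelt_inj aG (subsetP sSG s sS) pa (mem_p_elt pS sS) as_).
Qed.

Lemma mem_class_coset a b : a \in G -> b \in G -> p.-elt a -> p.-elt b ->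
  coset K a \in coset K b ^: (G / K) -> a \in b ^: G.
Proof.
move=> aG bG pa pb /imsetP[_ /morphimP[g _ gG ->]]; rewrite -morphJ ?inN // => abg.
by rewrite (coset_pelt_inj aG _ pa _ abg) ?memJ_class ?groupJ ?p_eltJ.
Qed.

Lemma prop34_partner_coset x y1 (S2 : {group gT}) y2 : x \in G -> y1 \in G ->
  prop34_partner G p x y1 S2 y2 ->
  prop34_partner (G / K)%G p (coset K x) (coset K y1) (S2 / K) (coset K y2).
Proof.
move=> xG y1G [/setIP[y2S2 /imsetP[g gG y2g]] [u [z [uG pu u1 zZ E]]]].
have y2G : y2 \in G by rewrite y2g groupJ.
have zG := subsetP (center_sub G) z zZ.
split; first by rewrite inE mem_quotient //= y2g morphJ ?inN // memJ_class ?mem_quotient.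
exists (coset K u), (coset K z); split.
- exact: mem_quotient.
- exact: morph_p_elt (inN uG) pu.
- by rewrite pelt_coset_eq1.
- by apply: subsetP (morphim_center G (coset_morphism K)) _ _; apply: mem_quotient.
by rewrite -!morphM ?inN // E.
Qed.

Hypothesis ZGK : 'Z(G / K) \subset 'Z(G) / K.

Lemma prop34_partner_lift x y1 (S2 : {group gT}) y2 :
  S2 \in 'Syl_p(G) -> x \in G -> y1 \in G -> y2 \in G -> p.-elt x -> p.-elt y2 ->
  prop34_partner (G / K)%G p (coset K x) (coset K y1) (S2 / K) (coset K y2) ->
  prop34_partner G p x y1 S2 y2.
Proof.
move=> syl2 xG y1G y2G px py2 [/setIP[y2S2 y2C] [ub [zb [ubG pub ub1 zbZ Eb]]]].
split; first by rewrite inE (mem_Sylow_coset syl2) ?(mem_class_coset y2G xG).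
have [u uG [pu ubu]] := quotient_pelt_lift ubG pub.
have /morphimP[z0 _ z0Z zbz0] := subsetP ZGK zb zbZ.
have z0G := subsetP (center_sub G) z0 z0Z.
set k := (u * z0)^-1 * (y1 * y2).
have kK : k \in K.
  apply: coset_idr; rewrite ?(groupM, groupV) ?inN //.
  by rewrite !(morphM, morphV) ?(groupM, groupV) ?inN //= ubu -zbz0 Eb mulVg.
exists u, (z0 * k); split=> //.
- by rewrite -(pelt_coset_eq1 uG pu) ubu.
- by rewrite groupM // (subsetP sKZ).
by rewrite mulgA /k mulKVg.
Qed.

Theorem prop34_property_quotient : prop34_property G p -> prop34_property (G / K)%G p.
Proof.
move=> prop34G xb xbG pxb xb1 yb1 yb1C Sb1 syl1 yb1S1 Sb2 syl2 Sb21.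
have [yb1G pyb1 _] := mem_class_pelt xbG pxb xb1 yb1C.
have [x xG [px xbx]] := quotient_pelt_lift xbG pxb.
have [y1 y1G [py1 yb1y1]] := quotient_pelt_lift yb1G pyb1.
have [S1 syl1' S1b] := quotient_Sylow_lift syl1.
have [S2 syl2' S2b] := quotient_Sylow_lift syl2.
subst xb yb1 Sb1 Sb2.
have x1 : x != 1 by rewrite -(pelt_coset_eq1 xG px).
have y1C : y1 \in x ^: G := mem_class_coset y1G xG py1 px yb1C.
have y1S1 : y1 \in S1 := mem_Sylow_coset syl1' y1G py1 yb1S1.
have S21 : S2 != S1 by apply: contra Sb21 => /eqP ->.
have [y2 [partner2 uniq2]] := prop34G x xG px x1 y1 y1C S1 syl1' y1S1 S2 syl2' S21.
have y2G : y2 \in G by case: partner2 => /setIP[_ /imsetP[g gG ->]] _; rewrite groupJ.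
exists (coset K y2); split; first exact: prop34_partner_coset.
move=> yb2 partner2b; have [/setIP[_ yb2C] _] := partner2b.
have [yb2G pyb2 _] := mem_class_pelt xbG pxb xb1 yb2C.
have [y2' y2'G [py2' yb2y2']] := quotient_pelt_lift yb2G pyb2; subst yb2.
by rewrite (uniq2 y2' (prop34_partner_lift syl2' xG y1G y2'G px py2' partner2b)).
Qed.

End QuotientByCentralPprimeSubgroup.

Section SL2Unipotent.
Local Open Scope group_scope.
Local Open Scope ring_scope.
Variables (F : finFieldType) (p : nat).
Hypothesis pcharFp : p \in [pchar F].
Local Notation gT := {'GL_2[F]}.
Local Notation G := (SL2_group F).
Implicit Types (x y z : F) (g h : gT).

Lemma GLval_inj : injective (@GLval 2 F).
Proof. exact: val_inj. Qed.

Lemma GLvalX g n : GLval (g ^+ n)%g = GLval g ^+ n.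
Proof. exact: FinRing.val_unitX. Qed.

Definition toGL (A : 'M[F]_2) : gT := insubd (1%g : gT) A.

Lemma toGLE A : \det A = 1 -> GLval (toGL A) = A.
Proof.
by move=> detA; rewrite val_insubd -[_ \is a _]/(A \in unitmx) unitmxE unitfE detA oner_eq0.
Qed.

Lemma toGL_SL2 A : \det A = 1 -> toGL A \in G.
Proof. by move=> detA; rewrite inE toGLE // detA. Qed.

Lemma toGL_unipE x y z : qform x y z = 0 -> GLval (toGL (unip x y z)) = unip x y z.
Proof. by move=> Q; rewrite toGLE // det_unip Q subr0. Qed.

Lemma toGL_unip_SL2 x y z : qform x y z = 0 -> toGL (unip x y z) \in G.
Proof. by move=> Q; rewrite inE toGL_unipE // det_unip Q subr0. Qed.

Lemma mxtrace_toGL_unip x y z : qform x y z = 0 -> \tr (GLval (toGL (unip x y z))) = 2.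
Proof. by move=> Q; rewrite toGL_unipE // mxtrace_unip. Qed.

Lemma qform_e12 : qform (0 : F) 1 0 = 0. Proof. by rewrite /qform; ring. Qed.
Lemma qform_e21 : qform (0 : F) 0 1 = 0. Proof. by rewrite /qform; ring. Qed.

Lemma SL2_peltE g : g \in G -> p.-elt g = (\tr (GLval g) == 2).
Proof.
rewrite inE => /eqP detg; apply/idP/eqP => [pg | trg].
  have [k ok] := p_natP pg.
  by apply: (mx2_unipotent_of_expn pcharFp (k := k)); rewrite // -ok -GLvalX expg_order.
have gp1 : (g ^+ p)%g = 1%g by apply: GLval_inj; rewrite GLvalX mx2_unipotent_expp.
by apply: (pnat_dvd _ (pnat_id (pcharf_prime pcharFp))); rewrite order_dvdn gp1.
Qed.

Lemma SL2_peltP g : g \in G -> p.-elt g ->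
  exists x y z, GLval g = unip x y z /\ qform x y z = 0.
Proof.
move=> gG; rewrite SL2_peltE // => /eqP trg.
by move: gG; rewrite inE => /eqP detg; apply: unipP.
Qed.

Definition unip_line x y z : {set gT} :=
  [set g : gT | [exists t : F, GLval g == unip (t * x) (t * y) (t * z)]].

Section UnipLine.
Variables x y z : F.
Hypothesis Q : qform x y z = 0.

Lemma unip_line_group_set : group_set (unip_line x y z).
Proof.
apply/group_setP; split; first by rewrite inE; apply/existsP; exists 0; rewrite !mul0r unip0.
move=> g h; rewrite !inE => /existsP[s /eqP gs] /existsP[t /eqP ht].
by apply/existsP; exists (s + t); rewrite GL_ME gs ht unipD.
Qed.

Canonical unip_line_group := Group unip_line_group_set.

Lemma unip_line_sub : unip_line x y z \subset G.
Proof.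
apply/subsetP => g; rewrite !inE => /existsP[t /eqP ->].
by rewrite det_unip qformZ Q mulr0 subr0.
Qed.

Lemma unip_line_pgroup : p.-group (unip_line x y z).
Proof.
apply/pgroupP => q q_pr /(Cauchy q_pr)[g gU og].
have gG := subsetP unip_line_sub g gU.
have := gU; rewrite inE => /existsP[t /eqP gt].
have : p.-elt g by rewrite SL2_peltE // gt mxtrace_unip.
by rewrite /p_elt og pnatE.
Qed.

End UnipLine.

Lemma GL_unip_neq1 g x y z : GLval g = unip x y z -> qform x y z = 0 -> g != 1%g ->
  (y != 0) || (z != 0).
Proof.
move=> gv Q g1; apply: (unip_neq1 Q).
by apply: contra g1 => /eqP v1; apply/eqP/GLval_inj; rewrite /= gv v1.
Qed.

(* Every Sylow [p]-subgroup is a line of unipotents: two unipotents whose product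
   is unipotent satisfy [bform = 0], hence are proportional by [qform_parallel]. *)
Lemma Sylow_SL2_unip_line (S : {group gT}) g x y z :
  S \in 'Syl_p(G) -> g \in S -> g != 1%g -> GLval g = unip x y z -> qform x y z = 0 ->
  S :=: unip_line x y z.
Proof.
rewrite inE => sylS gS g1 gv Q.
have [sSG pS _] := and3P sylS.
have yz := GL_unip_neq1 gv Q g1.
suff sSU : S \subset unip_line x y z.
  by rewrite (sub_pHall sylS (unip_line_pgroup Q) sSU (unip_line_sub Q)).
apply/subsetP => h hS.
have [x' [y' [z' [hw Q']]]] := SL2_peltP (subsetP sSG h hS) (mem_p_elt pS hS).
have := mem_p_elt pS (groupM gS hS).
rewrite SL2_peltE ?(subsetP sSG) ?groupM // GL_ME gv hw mxtrace_unipM => /eqP B.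
have [|t [e1 e2 e3]] := qform_parallel Q Q' yz; first by apply: (eq_lincomb1 (k := 1) B); ring.
by rewrite inE; apply/existsP; exists t; rewrite hw e1 e2 e3.
Qed.

Lemma GL_commute_unip_scalar g :
  commute g (toGL (unip 0 1 0)) -> commute g (toGL (unip 0 0 1)) ->
  GLval g = (GLval g 0 0)%:M.
Proof.
move=> /(congr1 val) c12 /(congr1 val) c21.
apply: mx2_commute_unip_scalar; first by rewrite -(toGL_unipE qform_e12); exact: c12.
by rewrite -(toGL_unipE qform_e21); exact: c21.
Qed.

Lemma SL2_center_scalar g : g \in 'Z(G) -> exists l, GLval g = l%:M /\ l * l = 1.
Proof.
case/centerP => gG cGg.
have gl : GLval g = (GLval g 0 0)%:M.
  by apply: GL_commute_unip_scalar; apply: cGg; [apply: toGL_unip_SL2 qform_e12|apply: toGL_unip_SL2 qform_e21].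
exists (GLval g 0 0); split=> //.
by move: gG; rewrite inE {1}gl det_scalar expr2 => /eqP.
Qed.

Lemma scalar_SL2_center g l : g \in G -> GLval g = l%:M -> g \in 'Z(G).
Proof.
by move=> gG gl; apply/centerP; split=> // h _; apply: GLval_inj; rewrite !GL_ME gl; exact: esym (scalar_mxC _ _).
Qed.

Hypothesis p_odd : odd p.
Let two_neq0 : (2 : F) != 0 := pchar_odd_two_neq0 pcharFp p_odd.

Lemma SL2_center_p'group : p^'.-group 'Z(G).
Proof.
apply/pgroupP => q q_pr /(Cauchy q_pr)[g gZ og].
have [l [gl l2]] := SL2_center_scalar gZ.
have g2 : (g ^+ 2)%g = 1%g.
  by apply: GLval_inj; rewrite GLvalX gl expr2 -[_ * _]/(_ *m _) -scalar_mxM l2.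
have : (q %| 2)%N by rewrite -og order_dvdn g2.
by rewrite dvdn_prime2 // => /eqP ->; rewrite !inE; apply: contraL p_odd => /eqP <-.
Qed.

(* If [g] is central modulo ['Z(G)], then [[~ e, g]] is a scalar [l%:M] and
   [e ^ g = e * l%:M] is unipotent, so [2 = \tr (e ^ g) = 2 * l] forces [l = 1]. *)
Lemma SL2_unip_commute e g : e \in G -> \tr (GLval e) = 2 -> g \in G ->
  coset 'Z(G) g \in 'Z(G / 'Z(G)) -> commute e g.
Proof.
move=> eG tre gG /centerP[_ cGg].
have nZG : G \subset 'N('Z(G)) := normal_norm (center_normal G).
have egZ : [~ e, g]%g \in 'Z(G).
  apply: coset_idr; first by rewrite (subsetP nZG) ?groupR.
  rewrite morphR ?(subsetP nZG) //=; apply/eqP/commgP/commute_sym.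
  by apply: cGg; apply: mem_quotient.
have [l [egl _]] := SL2_center_scalar egZ.
have : p.-elt (e ^ g)%g by rewrite p_eltJ SL2_peltE // tre.
rewrite SL2_peltE ?groupJ // conjg_mulR GL_ME egl [_ * _]mul_mx_scalar mxtraceZ tre.
move=> /eqP l2; have l1 : l = 1 by apply: (mulIf two_neq0); rewrite l2 mul1r.
by apply/commgP/eqP; apply: GLval_inj; rewrite egl l1.
Qed.

Lemma SL2_quotient_center_trivial : 'Z(G / 'Z(G)) = 1%g.
Proof.
apply/trivgP/subsetP => gb gbZ; rewrite inE.
have /morphimP[g _ gG gbg] := subsetP (center_sub _) gb gbZ.
rewrite gbg in gbZ *; apply/eqP/coset_id.
have commute_unip x y z : qform x y z = 0 -> commute g (toGL (unip x y z)).
  by move=> Q; apply/commute_sym/SL2_unip_commute; rewrite ?toGL_unip_SL2 ?mxtrace_toGL_unip.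
exact: scalar_SL2_center gG (GL_commute_unip_scalar (commute_unip _ _ _ qform_e12) (commute_unip _ _ _ qform_e21)).
Qed.

Lemma SL2_Sylow_bform_neq0 (S1 S2 : {group gT}) g1 g2 x1 y1 z1 x2 y2 z2 :
  S1 \in 'Syl_p(G) -> S2 \in 'Syl_p(G) -> S2 != S1 ->
  g1 \in S1 -> g1 != 1%g -> GLval g1 = unip x1 y1 z1 -> qform x1 y1 z1 = 0 ->
  g2 \in S2 -> g2 != 1%g -> GLval g2 = unip x2 y2 z2 -> qform x2 y2 z2 = 0 ->
  bform x1 y1 z1 x2 y2 z2 != 0.
Proof.
move=> syl1 syl2 S21 g1S1 g11 g1v Q1 g2S2 g21 g2v Q2; apply: contra S21 => /eqP B.
have [t [e1 e2 e3]] := qform_parallel Q1 Q2 (GL_unip_neq1 g1v Q1 g11) B.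
have g2S1 : g2 \in S1.
  by rewrite (Sylow_SL2_unip_line syl1 g1S1 g11 g1v Q1) inE; apply/existsP; exists t; rewrite g2v e1 e2 e3.
apply/eqP/group_inj.
by rewrite (Sylow_SL2_unip_line syl1 g2S1 g21 g2v Q2) (Sylow_SL2_unip_line syl2 g2S2 g21 g2v Q2).
Qed.

(* The partner is forced: [\tr (y1 * y2) = 2 + s * bform v w] must equal [\tr (u * z) = 2 * l]
   with [z = l%:M], [l = +-1], and [l = 1] would give [s = 0], i.e. [y2 = 1]. *)
Lemma SL2_partner_scale (y1 y2 u z : gT) a b c a' b' c' s :
  GLval y1 = unip a b c -> GLval y2 = unip (s * a') (s * b') (s * c') ->
  y2 != 1%g -> bform a b c a' b' c' != 0 ->
  u \in G -> p.-elt u -> z \in 'Z(G) -> (y1 * y2 = u * z)%g ->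
  s * bform a b c a' b' c' = -4.
Proof.
move=> y1v y2v y21 B0 uG pu zZ E.
have [l [zl l2]] := SL2_center_scalar zZ.
have /eqP tru : \tr (GLval u) == 2 by rewrite -SL2_peltE.
have : GLval y1 * GLval y2 = GLval u * GLval z by rewrite -!GL_ME E.
rewrite y1v y2v zl.
rewrite -bformZr; case/unipM_scalar_bform => // B.
suff s0 : s = 0 by case/eqP: y21; apply: GLval_inj; rewrite y2v s0 !mul0r unip0.
by apply: (mulIf B0); rewrite mul0r -bformZr.
Qed.

Lemma SL2_partner_exists (x y1 : gT) a b c a' b' c' :
  y1 \in x ^: G -> GLval y1 = unip a b c -> qform a b c = 0 -> qform a' b' c' = 0 ->
  bform a b c a' b' c' = -4 ->
  toGL (unip a' b' c') \in x ^: G /\ exists u z : gT,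
    [/\ u \in G, p.-elt u, u != 1%g, z \in 'Z(G) & (y1 * toGL (unip a' b' c') = u * z)%g].
Proof.
move=> y1C y1v Q Q' B; set y2 := toGL _; have y2v : GLval y2 = _ := toGL_unipE Q'.
have detM12 : \det (unip a b c * unip a' b' c') = 1 by rewrite detM !det_unip Q Q' subr0 mulr1.
split.
  have [K detK KE] := unip_conj two_neq0 Q Q' B.
  have Ky1 : (toGL K * y1 = y2 * toGL K)%g.
    by apply: GLval_inj; rewrite !GL_ME toGLE // y1v y2v KE.
  have -> : y2 = (y1 ^ (toGL K)^-1)%g by rewrite /conjg invgK mulgA Ky1 mulgK.
  by rewrite -(class_eqP y1C) memJ_class ?groupV ?toGL_SL2.
have detN1 : \det (- 1 : 'M[F]_2) = 1 by rewrite det_mx2N det1.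
exists (toGL (- (unip a b c * unip a' b' c'))), (toGL (-1)); split.
- by rewrite toGL_SL2 ?det_mx2N.
- by rewrite SL2_peltE ?toGL_SL2 ?det_mx2N // toGLE ?det_mx2N // raddfN /= mxtrace_unipM B; apply/eqP; ring.
- apply: contraNneq (unipM_neqN1 two_neq0 a' b' c' Q) => /(congr1 GLval).
  by rewrite toGLE ?det_mx2N // GL_1E => /eqP; rewrite eqr_oppLR.
- by apply: (scalar_SL2_center (l := -1)); rewrite ?toGL_SL2 // toGLE // raddfN.
by apply: GLval_inj; rewrite !GL_ME y1v y2v !toGLE ?det_mx2N ?det1 // mulrN1 opprK.
Qed.

Theorem SL2_prop34 : prop34_property G p.
Proof.
move=> x xG px x1 y1 y1C S1 syl1 y1S1 S2 syl2 S21.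
have [y1G py1 y11] := mem_class_pelt xG px x1 y1C.
have [a [b [c [y1v Q]]]] := SL2_peltP y1G py1.
have [h hS2 h1] := Sylow_nontrivial syl1 syl2 y1S1 y11.
have := syl2; rewrite inE => /and3P[sS2G pS2 _].
have [a' [b' [c' [hv Q']]]] := SL2_peltP (subsetP sS2G h hS2) (mem_p_elt pS2 hS2).
have S2E := Sylow_SL2_unip_line syl2 hS2 h1 hv Q'.
have B0 := SL2_Sylow_bform_neq0 syl1 syl2 S21 y1S1 y11 y1v Q hS2 h1 hv Q'.
pose t := -4 / bform a b c a' b' c'.
have Qt : qform (t * a') (t * b') (t * c') = 0 by rewrite qformZ Q' mulr0.
have Bt : bform a b c (t * a') (t * b') (t * c') = -4 by rewrite bformZr divfK.
have [y2C partner] := SL2_partner_exists y1C y1v Q Qt Bt.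
exists (toGL (unip (t * a') (t * b') (t * c'))); split.
  by split=> //; rewrite inE y2C andbT S2E inE; apply/existsP; exists t; rewrite toGL_unipE.
move=> y2 [/setIP[y2S2 y2C'] [u [z [uG pu _ zZ E]]]].
have := y2S2; rewrite S2E inE => /existsP[s /eqP y2v].
have [_ _ y21] := mem_class_pelt xG px x1 y2C'.
have /(canRL (mulfK B0)) st := SL2_partner_scale y1v y2v y21 B0 uG pu zZ E.
by apply: GLval_inj; rewrite toGL_unipE // y2v st.
Qed.

End SL2Unipotent.

Theorem proposition3p4 (F : finFieldType) (p : nat) :
  prime p -> odd p -> p \in [pchar F]%R ->
  prop34_property (SL2_group F) p /\ prop34_property (PSL2 F) p.
Proof.
(* [prime p] is already implied by [p \in [pchar F]]. *)
move=> _ p_odd pcharFp; have prop34_SL2 := SL2_prop34 pcharFp p_odd.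
split=> //; apply: prop34_property_quotient prop34_SL2.
- exact: subxx.
- exact: SL2_center_p'group.
by rewrite (SL2_quotient_center_trivial pcharFp p_odd) sub1G.
Qed.
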